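(* Let $M$ be a matroid, let $k\ge 0$ be an integer, and let $\mathcal{C}$ be a collection of circuits of $M$ such that, for some $J \subseteq E(M)$ with $|J|\leq k$, we have $C\cap C'=J$ for all distinct $C,C'\in\mathcal{C}$. Then, for every subcollection $\{C_1,\dotsc,C_{2^k}\}\subseteq\mathcal{C}$ of size $2^k$, there is a circuit of $M$ contained in $\left(\bigcup_{i=1}^{2^k}C_i\right)-J$. *)

From mathcomp Require Import all_boot.
Set Implicit Arguments. Unset Strict Implicit. Unset Printing Implicit Defensive.

(* A (finite) matroid whose ground set E(M) is the finite type T,
   given by its independent sets (standard independence axioms). *)
Record matroid (T : finType) := Matroid {
  indep : {set T} -> bool;
  indep0 : indep set0;
  indep_sub : forall A B : {set T}, A \subset B -> indep B -> indep A;
  indep_aug : forall A B : {set T}, indep A -> indep B -> #|A| < #|B| ->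
      exists2 x, x \in B :\: A & indep (x |: A)
}.

Definition circuit (T : finType) (M : matroid T) (C : {set T}) : Prop :=
  ~~ indep M C /\ forall D : {set T}, D \proper C -> indep M D.

From mathcomp Require Import all_boot zify.
Set Implicit Arguments. Unset Strict Implicit. Unset Printing Implicit Defensive.

(* Induction on |J|, for an independent J.  Fix e in J and pair up the
   circuits of the family: two distinct circuits always contain a circuit
   avoiding e (by circuit elimination when e lies in both).  As the pairs only
   meet inside J, the circuits so obtained pairwise meet inside J - e, and they
   are distinct because J is independent.  Each halving of the family removes
   an element of J, so 2^|J| circuits yield one avoiding J.  In the theorem J
   is independent, being the intersection of two distinct circuits (or empty
   when k = 0). *)

Section Circuits.
Variables (T : finType) (M : matroid T).

Lemma dep_has_circuit (A : {set T}) :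
  ~~ indep M A -> exists2 C, circuit M C & C \subset A.
Proof.
move=> depA.
have PA : [pred B : {set T} | (B \subset A) && ~~ indep M B] A by rewrite /= subxx.
case: (arg_minnP (fun B : {set T} => #|B|) PA) => C /andP[CA depC] minC.
exists C => //; split=> // D ltDC; apply: contraT => depD.
have /minC : (D \subset A) && ~~ indep M D.
  by rewrite depD andbT (subset_trans (proper_sub ltDC) CA).
by rewrite leqNgt proper_card.
Qed.

Lemma circuit_not_subset_indep (C I : {set T}) :
  circuit M C -> indep M I -> ~~ (C \subset I).
Proof. by move=> [depC _] indI; apply/negP => /indep_sub/(_ indI); apply/negP. Qed.

Lemma circuit_subset_eq (C C' : {set T}) :
  circuit M C -> circuit M C' -> C \subset C' -> C = C'.
Proof.
move=> [depC _] [_ minC'] sCC'; apply/eqP; apply: contraNT depC => neCC'.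
by apply: minC'; rewrite properEneq neCC'.
Qed.

Lemma circuit_setI_indep (C C' : {set T}) :
  circuit M C -> circuit M C' -> C != C' -> indep M (C :&: C').
Proof.
move=> cC cC' neCC'; apply: cC.2; rewrite properEneq subsetIl andbT.
by apply: contra neCC' => /eqP/setIidPl/(circuit_subset_eq cC cC')->.
Qed.

Lemma exists_maximal_indep (I0 X : {set T}) : indep M I0 -> I0 \subset X ->
  exists I : {set T}, [/\ I0 \subset I, I \subset X, indep M I &
    forall x, x \in X :\: I -> ~~ indep M (x |: I)].
Proof.
move=> indI0 sI0X.
pose P := [pred I : {set T} | [&& I0 \subset I, I \subset X & indep M I]].
have PI0 : P I0 by rewrite /= subxx sI0X.
case: (arg_maxnP (fun B : {set T} => #|B|) PI0) => I /and3P[sI0I sIX indI] maxI.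
exists I; split=> // x /setDP[xX xI]; apply/negP => indxI.
have /maxI : P (x |: I).
  by rewrite /= indxI (subset_trans sI0I (subsetUr _ _)) subUset sub1set xX sIX.
by rewrite cardsU1 xI; lia.
Qed.

Lemma maximal_indep_max_card (I X B : {set T}) : indep M I ->
  (forall x, x \in X :\: I -> ~~ indep M (x |: I)) ->
  indep M B -> B \subset X -> #|B| <= #|I|.
Proof.
move=> indI maxI indB sBX; rewrite leqNgt; apply/negP => ltIB.
case: (indep_aug indI indB ltIB) => x /setDP[xB xI]; apply/negP/maxI.
by rewrite inE xI (subsetP sBX).
Qed.

Lemma circuit_elim_dep (C1 C2 : {set T}) e :
  circuit M C1 -> circuit M C2 -> C1 != C2 -> e \in C1 -> e \in C2 ->
  ~~ indep M ((C1 :|: C2) :\ e).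
Proof.
move=> cC1 cC2 neC e1 e2; set X := C1 :|: C2; apply/negP => indXe.
have [f f1 f2] : exists2 f, f \in C1 & f \notin C2.
  by apply/subsetPn; apply: contra neC => /(circuit_subset_eq cC1 cC2)->.
(* A maximal independent I with C1 - f <= I <= C1 u C2 misses f and some g in
   C2, so it is smaller than (C1 u C2) - e. *)
have [I [sI sIX indI maxI]] := exists_maximal_indep (cC1.2 _ (properD1 f1))
  (subset_trans (subsetDl C1 [set f]) (subsetUl C1 C2)).
have fI : f \notin I.
  apply/negP => fI; move: cC1.1; rewrite -(setD1K f1) (indep_sub _ indI) //.
  by rewrite subUset sub1set fI.
have [g g2 gI] : exists2 g, g \in C2 & g \notin I.
  by apply/subsetPn; apply: contra cC2.1 => /indep_sub; apply.
have gf : g != f by apply: contraNneq f2 => <-.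
have sIXfg : I \subset X :\ f :\ g.
  by apply/subsetP => x xI; rewrite !in_setD1 (subsetP sIX) // andbT;
    apply/andP; split; [apply: contraNneq gI | apply: contraNneq fI] => <-.
have := maximal_indep_max_card indI maxI indXe (subsetDl _ _).
have := subset_leq_card sIXfg.
have := cardsD1 e X; have := cardsD1 f X; have := cardsD1 g (X :\ f).
rewrite !inE gf g2 f1 e1 orbT /= !add1n => cXfg cXf cXe lefg; apply/negP.
have -> : #|X :\ e| = #|X :\ f :\ g|.+1 by apply: succn_inj; rewrite -cXe cXf cXfg.
by rewrite -ltnNge ltnS; exact: lefg.
Qed.

Lemma circuit_elimination (C1 C2 : {set T}) e :
  circuit M C1 -> circuit M C2 -> C1 != C2 ->
  exists2 D, circuit M D & D \subset (C1 :|: C2) :\ e.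
Proof.
move=> cC1 cC2 neC.
have [e1|e1] := boolP (e \in C1); last first.
  by exists C1; rewrite // subsetD1 subsetUl.
have [e2|e2] := boolP (e \in C2); last first.
  by exists C2; rewrite // subsetD1 subsetUr.
exact: dep_has_circuit (circuit_elim_dep cC1 cC2 neC e1 e2).
Qed.

Definition pairwise_meet_sub (F : {set {set T}}) (J : {set T}) : Prop :=
  {in F &, forall C C', C != C' -> C :&: C' \subset J}.

Lemma pairwise_meet_sub_setU1 (G : {set {set T}}) (J D : {set T}) :
  pairwise_meet_sub G J -> {in G, forall D', D :&: D' \subset J} ->
  pairwise_meet_sub (D |: G) J.
Proof.
move=> mG meetD A B; rewrite !in_setU1 => /predU1P[->|AG] /predU1P[->|BG] neAB.
- by rewrite eqxx in neAB.
- exact: meetD.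
- by rewrite setIC; apply: meetD.
- exact: mG.
Qed.

Lemma meet_bigcup_sub (F B : {set {set T}}) (J C : {set T}) :
  pairwise_meet_sub F J -> C \in F -> B \subset F :\ C ->
  C :&: \bigcup_(D in B) D \subset J.
Proof.
move=> mF CF sB; apply/subsetP => x /setIP[xC /bigcupP[D DB xD]].
have /setD1P[neDC DF] := subsetP sB D DB.
by apply: (subsetP (mF _ _ CF DF _)); rewrite 1?eq_sym // inE xC.
Qed.

Lemma halve_circuit_family (J : {set T}) e m (F : {set {set T}}) :
  indep M J -> {in F, forall C, circuit M C} -> pairwise_meet_sub F J ->
  2 * m <= #|F| ->
  exists G : {set {set T}}, [/\ m <= #|G|, {in G, forall D, circuit M D},
    pairwise_meet_sub G (J :\ e) &
    \bigcup_(D in G) D \subset (\bigcup_(C in F) C) :\ e].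
Proof.
move=> indJ; elim: m F => [|m IH] F cF mF leF.
  by exists set0; split=> [|D|D D'|]; rewrite ?big_set0 ?sub0set ?inE.
have [C1 [C2 [C1F C2F neC]]] : exists C1 C2, [/\ C1 \in F, C2 \in F & C1 != C2].
  by apply/card_gt1P; lia.
set F0 := F :\ C1 :\ C2.
have sF0F : F0 \subset F := subset_trans (subsetDl _ _) (subsetDl _ _).
have cF0 : {in F0, forall C, circuit M C} by move=> C /(subsetP sF0F)/cF.
have mF0 : pairwise_meet_sub F0 J := sub_in2 (subsetP sF0F) mF.
have leF0 : 2 * m <= #|F0|.
  have cardF : #|F| = #|F0|.+2.
    by rewrite (cardsD1 C1) C1F (cardsD1 C2 (F :\ C1)) !in_setD1 C2F eq_sym neC.
  by move: leF; rewrite cardF; lia.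
have [G0 [leG0 cG0 mG0 sG0]] := IH F0 cF0 mF0 leF0.
have [D cD sD] := circuit_elimination e (cF _ C1F) (cF _ C2F) neC.
have meetD : forall D', D' \in G0 -> D :&: D' \subset J :\ e.
  move=> D' D'G0; apply/subsetP => x /setIP[xD xD'].
  have /setD1P[xe x12] := subsetP sD x xD.
  have /setD1P[_ xF0] := subsetP sG0 x (subsetP (bigcup_sup _ D'G0) x xD').
  rewrite in_setD1 xe /=; case/setUP: x12 => [x1|x2].
    apply: (subsetP (meet_bigcup_sub mF C1F (subsetDl (F :\ C1) [set C2]))).
    exact/setIP.
  apply: (subsetP (meet_bigcup_sub mF C2F (setSD _ (subsetDl F [set C1])))).
  exact/setIP.
have DnG0 : D \notin G0.
  apply/negP => DG0; have := meetD _ DG0; rewrite setIid => sDJ.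
  move/negP: (circuit_not_subset_indep cD indJ); apply.
  exact: subset_trans sDJ (subsetDl _ _).
have sF0 : \bigcup_(C in F0) C \subset \bigcup_(C in F) C.
  by apply/bigcupsP => C /(subsetP sF0F) CF; apply: bigcup_sup.
exists (D |: G0); split.
- by rewrite cardsU1 DnG0.
- by move=> D'; rewrite in_setU1 => /predU1P[->|/cG0].
- exact: pairwise_meet_sub_setU1.
- apply/bigcupsP => D'; rewrite in_setU1 => /predU1P[->|D'G0].
    by apply: subset_trans sD (setSD _ _); rewrite subUset !bigcup_sup.
  by apply: subset_trans (bigcup_sup _ D'G0) (subset_trans sG0 (setSD _ sF0)).
Qed.

Lemma exists_circuit_avoiding (J : {set T}) (F : {set {set T}}) :
  indep M J -> {in F, forall C, circuit M C} -> pairwise_meet_sub F J ->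
  2 ^ #|J| <= #|F| ->
  exists2 C, circuit M C & C \subset (\bigcup_(D in F) D) :\: J.
Proof.
move Jn: #|J| => n; elim: n J F Jn => [|n IH] J F Jn indJ cF mF leF.
  have [C CF] : exists C, C \in F by apply/set0Pn; rewrite -card_gt0.
  by exists C; [exact: cF | rewrite (cards0_eq Jn) setD0 (bigcup_sup C CF)].
have [e eJ] : exists e, e \in J by apply/set0Pn; rewrite -card_gt0 Jn.
rewrite expnS in leF.
have [G [leG cG mG sG]] := halve_circuit_family e indJ cF mF leF.
have JeN : #|J :\ e| = n by move: (cardsD1 e J); rewrite eJ Jn add1n => -[].
have [C cC sC] := IH _ G JeN (indep_sub (subsetDl _ _) indJ) cG mG leG.
exists C => //; apply: subset_trans sC _; apply/subsetP => x /setDP[xG xJe].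
have /setD1P[xe xF] := subsetP sG x xG.
by rewrite inE xF andbT; move: xJe; rewrite in_setD1 xe.
Qed.

End Circuits.

Theorem lemma3p1 (T : finType) (M : matroid T) (k : nat)
  (Cs : {set {set T}}) (J : {set T})
  (HCs : forall C, C \in Cs -> circuit M C)
  (HJk : #|J| <= k)
  (HJ : forall C C', C \in Cs -> C' \in Cs -> C != C' -> C :&: C' = J) :
  forall S : {set {set T}}, S \subset Cs -> #|S| = 2 ^ k ->
    exists C : {set T}, circuit M C /\
      C \subset (\bigcup_(D in S) D) :\: J.
Proof.
move=> S sSCs cardS.
have indJ : indep M J.
  have [/card_gt1P[C [C' [/(subsetP sSCs) CCs /(subsetP sSCs) C'Cs neC]]] | leS1]
    := ltnP 1 #|S|.
    by rewrite -(HJ C C') //; apply: circuit_setI_indep => //; apply: HCs.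
  suff /cards0_eq-> : #|J| = 0 by apply: indep0.
  apply/eqP; rewrite -leqn0 (leq_trans HJk) // -(@leq_exp2l 2) // -cardS.
  exact: leS1.
have cS : {in S, forall C, circuit M C} by move=> C /(subsetP sSCs)/HCs.
have mS : pairwise_meet_sub S J.
  by move=> C C' /(subsetP sSCs) CCs /(subsetP sSCs) C'Cs neC; rewrite HJ.
have leS : 2 ^ #|J| <= #|S| by rewrite cardS leq_exp2l.
by have [C] := exists_circuit_avoiding indJ cS mS leS; exists C.
Qed.
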